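(* Let $G$ be a connected graph and let $e = \{a,b\}$ be a cut-edge of $G$. Let $G_a$ and $G_b$ be the connected components of $G$ with the edge $e$ removed (containing $a$ and $b$ respectively). Then for any minimal fort $F$ of $G$ with $a, b \notin F$, either $V(G_a) \cap F = \emptyset$ or $V(G_b) \cap F = \emptyset$.
   Context: A fort of a graph $G$ is a nonempty set $F\subseteq V(G)$ such that every vertex outside $F$ is adjacent to either zero or at least two vertices of $F$; it is minimal if no proper subset is a fort. *)

From mathcomp Require Import all_boot.
Set Implicit Arguments. Unset Strict Implicit. Unset Printing Implicit Defensive.

Definition simple_graph (T : finType) (g : rel T) : Prop :=
  symmetric g /\ irreflexive g.

Definition connected_graph (T : finType) (g : rel T) : Prop :=
  forall x y : T, connect g x y.

Definition nbhd (T : finType) (g : rel T) (v : T) : {set T} := [set u | g v u].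

Definition fort (T : finType) (g : rel T) (F : {set T}) : Prop :=
  F != set0 /\ forall v, v \notin F -> #|nbhd g v :&: F| != 1.

Definition minimal_fort (T : finType) (g : rel T) (F : {set T}) : Prop :=
  fort g F /\ forall F' : {set T}, F' \proper F -> ~ fort g F'.

Definition remove_edge (T : finType) (g : rel T) (a b : T) : rel T :=
  fun x y => g x y && ~~ (((x == a) && (y == b)) || ((x == b) && (y == a))).

Definition cut_edge (T : finType) (g : rel T) (a b : T) : Prop :=
  g a b /\ ~~ connect (remove_edge g a b) a b.

Definition comp_after_removal (T : finType) (g : rel T) (a b x : T) : {set T} :=
  [set y | connect (remove_edge g a b) x y].

From mathcomp Require Import all_boot.

(* Since F avoids a and b, no edge at a vertex of F is the removed edge, so
   every component C of G - ab is closed along the edges at F.  For such C,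
   a vertex of C sees the same F-neighbours in C :&: F as in F, and a vertex
   outside C sees none, so C :&: F is a fort as soon as it is nonempty.
   Minimality of F then forces F \subset C; were F to meet both G_a and G_b
   it would lie in both, and a common vertex would connect a to b in G - ab. *)

Section FortRestriction.

Context {T : finType} {g : rel T} {F C : {set T}}.

Hypothesis closed_at_F : forall u v, u \in F -> g v u -> (v \in C) = (u \in C).

Lemma nbhd_setI_closed v :
  nbhd g v :&: (C :&: F) = if v \in C then nbhd g v :&: F else set0.
Proof.
apply/setP => u; rewrite !inE.
case uF: (u \in F); rewrite ?andbF; last by case: ifP; rewrite ?inE ?uF ?andbF.
case gvu: (g v u) => /=; last by case: ifP; rewrite ?inE ?gvu.
by rewrite -(closed_at_F _ _ uF gvu); case: ifP; rewrite ?inE ?gvu ?uF.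
Qed.

Lemma fort_setI_closed : fort g F -> C :&: F != set0 -> fort g (C :&: F).
Proof.
move=> [_ fortF] CF0; split=> // v; rewrite nbhd_setI_closed in_setI.
by case: ifP => [_ /= /fortF | _ _]; rewrite ?cards0.
Qed.

Lemma minimal_fort_sub_closed :
  minimal_fort g F -> C :&: F != set0 -> F \subset C.
Proof.
move=> [fortF minF] CF0; apply/setIidPr/eqP/negPn/negP => CF_neq_F.
apply: (minF (C :&: F)); last exact: fort_setI_closed.
by rewrite properEneq CF_neq_F subsetIr.
Qed.

End FortRestriction.

Section RemoveEdge.

Variables (T : finType) (g : rel T) (a b : T).
Hypothesis g_sym : symmetric g.

Lemma remove_edge_sym : symmetric (remove_edge g a b).
Proof.
move=> x y; rewrite /remove_edge g_sym.
by rewrite orbC (andbC (y == a)) (andbC (y == b)).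
Qed.

Lemma connect_remove_edge_sym : connect_sym (remove_edge g a b).
Proof. exact: sym_connect_sym remove_edge_sym. Qed.

Lemma remove_edge_away {u v} :
  u != a -> u != b -> g v u -> remove_edge g a b v u.
Proof.
move=> ua ub gvu; rewrite /remove_edge gvu /=.
by rewrite (negbTE ua) (negbTE ub) !andbF.
Qed.

Lemma comp_after_removal_closed x u v : u != a -> u != b -> g v u ->
  (v \in comp_after_removal g a b x) = (u \in comp_after_removal g a b x).
Proof.
move=> ua ub gvu; rewrite !inE.
exact: (connect_closed connect_remove_edge_sym x (remove_edge_away ua ub gvu)).
Qed.

End RemoveEdge.

Theorem mainTheorem6 (T : finType) (g : rel T) (a b : T) (F : {set T}) :
  simple_graph g -> connected_graph g -> cut_edge g a b ->
  minimal_fort g F -> a \notin F -> b \notin F ->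
  comp_after_removal g a b a :&: F = set0 \/
  comp_after_removal g a b b :&: F = set0.
Proof.
move=> [g_sym _] _ [_ ncab] minF aF bF.
have closedF x u v : u \in F -> g v u ->
    (v \in comp_after_removal g a b x) = (u \in comp_after_removal g a b x).
  move=> uF; apply: comp_after_removal_closed => //.
  - by apply: contraNneq aF => <-.
  - by apply: contraNneq bF => <-.
case: (eqVneq (comp_after_removal g a b a :&: F) set0) => [|AF]; first by left.
case: (eqVneq (comp_after_removal g a b b :&: F) set0) => [|BF]; first by right.
have /subsetP FA := minimal_fort_sub_closed (closedF a) minF AF.
have /subsetP FB := minimal_fort_sub_closed (closedF b) minF BF.
have [[/set0Pn [w wF] _] _] := minF.
move: (FA w wF) (FB w wF); rewrite !inE => aw bw.
case/negP: ncab; apply: connect_trans aw _.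
by rewrite connect_remove_edge_sym.
Qed.
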